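(* Let $n$ and $k$ be positive integers with $n\ge3k$. Then $B_2(n,k,2k;3)\ge 2^{\lfloor (n-k)/k\rfloor}$.
   Context: For a prime power $q$, $\mathcal{G}_q(n,k)$ denotes the set of all $k$-dimensional subspaces of $\mathbb{F}_q^n$. An $\alpha$-$(n,k,\delta)_q^c$ covering Grassmannian code is a subset $\mathcal{C}\subseteq\mathcal{G}_q(n,k)$ (no repeated codewords) such that every set of $\alpha$ distinct codewords of $\mathcal{C}$ spans a subspace of $\mathbb{F}_q^n$ of dimension at least $k+\delta$. $B_q(n,k,\delta;\alpha)$ denotes the maximum size of an $\alpha$-$(n,k,\delta)_q^c$ code. *)

From HB Require Import structures.
From mathcomp Require Import all_boot all_algebra.
Set Implicit Arguments. Unset Strict Implicit. Unset Printing Implicit Defensive.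
Local Open Scope ring_scope.

Section FinSpace.
Variables (K : finFieldType) (vT : vectType K).
Definition fspace := {vspace vT}.
HB.instance Definition _ := SubChoice.on fspace.
HB.instance Definition _ := [Finite of fspace by <:].
End FinSpace.

(* The ambient space F^n is 'rV[F]_n; codes are sets of subspaces (no
   repetition). *)
Definition covering_code (F : finFieldType) (n k delta alpha : nat)
    (C : {set fspace 'rV[F]_n}) : bool :=
  [forall U in C, \dim (U : {vspace 'rV[F]_n}) == k] &&
  [forall S : {set fspace 'rV[F]_n},
     (S \subset C) && (#|S| == alpha) ==>
     (k + delta <= \dim (\sum_(U in S) (U : {vspace 'rV[F]_n}))%VS)%N].

Definition Bq (F : finFieldType) (n k delta alpha : nat) : nat :=
  \max_(C : {set fspace 'rV[F]_n} | covering_code k delta alpha C) #|C|.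

(* For b in F_2^m put w_b = (1, b) in F_2^(1+m) and let U_b be the row space
   of the k x n matrix M_b whose q-th block of k columns is (w_b)_q I_k.  Read
   on the r-th column of every block, x1 M_b1 + x2 M_b2 + x3 M_b3 = 0 becomes
   (x1)_r w_b1 + (x2)_r w_b2 + (x3)_r w_b3 = 0.  Three distinct binary vectors
   with leading entry 1 are linearly independent over F_2: one or three
   coefficients 1 fail on the leading entry, and exactly two would make two of
   the vectors equal.  Hence three distinct U_b span a space of dimension 3k,
   and the 1 + floor((n-k)/k) blocks fit into n columns. *)

From mathcomp Require Import all_boot all_algebra.

Set Implicit Arguments. Unset Strict Implicit.
Import GRing.Theory.
Local Open Scope ring_scope.

Lemma free3P (K : fieldType) (vT : vectType K) (u v w : vT) :
  reflect (forall a b c : K,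
             a *: u + b *: v + c *: w = 0 -> [/\ a = 0, b = 0 & c = 0])
          (free [:: u; v; w]).
Proof.
apply: (iffP (freeP (X := [tuple u; v; w]))) => [uvw_free a b c abc | uvw_indep f].
  have := uvw_free (fun i : 'I_3 => [:: a; b; c]`_i).
  rewrite !big_ord_recl big_ord0 /= addr0 addrA => /(_ abc) f0.
  by split; [exact: (f0 0) | exact: (f0 1) | exact: (f0 2)].
rewrite !big_ord_recl big_ord0 /= addr0 addrA => /uvw_indep [f0 f1 f2] i.
case: i => [[|[|[|//]]] ?]; [rewrite -f0 | rewrite -f1 | rewrite -f2];
  by congr f; apply/val_inj.
Qed.

Section RowImage.
Variables (F : fieldType) (n : nat).

Definition row_image p (M : 'M[F]_(p, n)) : {vspace 'rV[F]_n} :=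
  limg (linfun (@mulmxr F 1 p n M)).

Lemma row_imageP p (M : 'M_(p, n)) v :
  reflect (exists x, v = x *m M) (v \in row_image M).
Proof.
by apply: (iffP memv_imgP) => [[x _ ->] | [x ->]]; exists x; rewrite ?lfunE ?memvf.
Qed.

Lemma mulmx_row_image p (M : 'M_(p, n)) x : x *m M \in row_image M.
Proof. by apply/row_imageP; exists x. Qed.

Lemma dim_row_image p (M : 'M_(p, n)) :
  (forall x : 'rV_p, x *m M = 0 -> x = 0) -> \dim (row_image M) = p.
Proof.
move=> M_inj; rewrite limg_dim_eq ?dimvf ?dim_matrix ?mul1r // capfv.
apply/eqP/lker0P => x y; rewrite !lfunE /= => Exy.
by apply/eqP; rewrite -subr_eq0; apply/eqP/M_inj; rewrite mulmxBl Exy subrr.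
Qed.

Lemma row_image_col_mx p q (A : 'M_(p, n)) (B : 'M_(q, n)) :
  (row_image (col_mx A B) <= row_image A + row_image B)%VS.
Proof.
apply/subvP => _ /row_imageP [x ->].
by rewrite -[x]hsubmxK mul_row_col memv_add ?mulmx_row_image.
Qed.

End RowImage.

Section BlockMatrix.
Variables (F : fieldType) (n k m : nat).
Hypotheses (k_gt0 : (0 < k)%N) (mk_le_n : (m * k <= n)%N).

Lemma block_index_subproof (q : 'I_m) (r : 'I_k) : (q * k + r < n)%N.
Proof.
apply: leq_trans mk_le_n; rewrite -ltn_divLR ?divnMDl // divn_small //.
by rewrite addn0.
Qed.

Definition block_index q r : 'I_n := Ordinal (block_index_subproof q r).

(* The q-th block of k columns is w_q times the identity, for q < m; the
   last n - m k columns are zero. *)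
Definition blockmx (w : 'rV[F]_m) : 'M[F]_(k, n) :=
  \matrix_(r, j) if (r == j %% k :> nat)%N then
                   (if insub (j %/ k)%N is Some q then w 0 q else 0)
                 else 0.

Lemma blockmx_index w (x : 'rV_k) q r :
  (x *m blockmx w) 0 (block_index q r) = x 0 r * w 0 q.
Proof.
have [mod_qr div_qr] : ((q * k + r) %% k = r /\ (q * k + r) %/ k = q)%N.
  by rewrite modnMDl modn_small // divnMDl // divn_small // addn0.
rewrite mxE (bigD1 r) //= big1 => [|r' r'r]; rewrite mxE /= mod_qr div_qr.
  by rewrite eqxx valK addr0.
by move: r'r; rewrite -(inj_eq val_inj) => /negPf ->; rewrite mulr0.
Qed.

Lemma blockmx_eq0 (w : 'rV[F]_m) (x : 'rV_k) : w != 0 -> x *m blockmx w = 0 -> x = 0.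
Proof.
move=> w_neq0 xw0; have [q wq_neq0] : exists q, w 0 q != 0.
  apply/existsP; apply: contraNT w_neq0 => /existsPn w0.
  by apply/eqP/rowP => q; rewrite mxE; apply/eqP/negbNE/w0.
apply/rowP => r; have := congr1 (fun y : 'rV_n => y 0 (block_index q r)) xw0.
by rewrite blockmx_index !mxE => /eqP; rewrite mulf_eq0 (negPf wq_neq0) orbF => /eqP.
Qed.

Lemma dim_row_image_blockmx (w : 'rV[F]_m) :
  w != 0 -> \dim (row_image (blockmx w)) = k.
Proof. by move=> w_neq0; apply: dim_row_image => x; apply: blockmx_eq0. Qed.

Lemma row_image_blockmx_inj (w1 w2 : 'rV[F]_m) q0 :
  w1 0 q0 = w2 0 q0 -> w1 0 q0 != 0 -> row_image (blockmx w1) = row_image (blockmx w2) -> w1 = w2.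
Proof.
move=> w12_q0 w1_q0 eq_img; pose x : 'rV[F]_k := const_mx 1.
have /row_imageP [y xy] : x *m blockmx w1 \in row_image (blockmx w2).
  by rewrite -eq_img mulmx_row_image.
have coord q r : x 0 r * w1 0 q = y 0 r * w2 0 q.
  by rewrite -!blockmx_index xy.
have y1 r : y 0 r = 1.
  by apply: (mulIf w1_q0); rewrite w12_q0 -coord w12_q0 mxE mul1r.
by apply/rowP => q; have := coord q (Ordinal k_gt0); rewrite y1 mxE !mul1r.
Qed.

Lemma blockmx3_eq0 (w1 w2 w3 : 'rV[F]_m) (x1 x2 x3 : 'rV_k) :
  free [:: w1; w2; w3] ->
  x1 *m blockmx w1 + x2 *m blockmx w2 + x3 *m blockmx w3 = 0 ->
  [/\ x1 = 0, x2 = 0 & x3 = 0].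
Proof.
move/free3P => w_indep xw0.
have x0 r : [/\ x1 0 r = 0, x2 0 r = 0 & x3 0 r = 0].
  apply: w_indep; apply/rowP => q.
  move/(congr1 (fun y : 'rV_n => y 0 (block_index q r))): xw0.
  by rewrite 2!mxE !blockmx_index !mxE.
by split; apply/rowP => r; case: (x0 r); rewrite !mxE.
Qed.

Lemma dim_row_image_blockmx3 (w1 w2 w3 : 'rV[F]_m) : free [:: w1; w2; w3] ->
  (3 * k <= \dim (row_image (blockmx w1) + row_image (blockmx w2)
                  + row_image (blockmx w3)))%N.
Proof.
move=> w_free; set M := col_mx (col_mx (blockmx w1) (blockmx w2)) (blockmx w3).
have dimM : \dim (row_image M) = (k + k + k)%N.
  apply: dim_row_image => x; rewrite -[x]hsubmxK -[lsubmx x]hsubmxK !mul_row_col.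
  by move=> /(blockmx3_eq0 w_free) [-> -> ->]; rewrite !row_mx0.
have sub_M : (row_image M <= row_image (blockmx w1) + row_image (blockmx w2)
                             + row_image (blockmx w3))%VS.
  by apply: subv_trans (row_image_col_mx _ _) _; rewrite addvS ?row_image_col_mx.
by rewrite !mulSn mul0n addn0 addnA -dimM dimvS.
Qed.

End BlockMatrix.

Lemma Fp2_cases (a : 'F_2) : a = 0 \/ a = 1.
Proof. by case: a => [[|[|//]] ?]; [left | right]; apply/val_inj. Qed.

Lemma oppv_Fp2 (V : lmodType 'F_2) (v : V) : - v = v.
Proof. by rewrite -scaleN1r oppr_pchar2 ?scale1r // pchar_Fp. Qed.

Section BinaryCode.
Variables (m : nat).

Definition binary_weight (b : 'rV['F_2]_m) : 'rV['F_2]_(1 + m) := row_mx 1 b.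

Lemma binary_weight_lead b : binary_weight b 0 (lshift m ord0) = 1.
Proof. by rewrite row_mxEl mxE. Qed.

Lemma free_binary_weight3 b1 b2 b3 : b1 != b2 -> b2 != b3 -> b3 != b1 ->
  free [:: binary_weight b1; binary_weight b2; binary_weight b3].
Proof.
move=> b12 b23 b31; apply/free3P => a1 a2 a3.
rewrite /binary_weight !scale_row_mx !add_row_mx => /eqP.
rewrite row_mx_eq0 => /andP [lead tail].
move/eqP/(congr1 (fun y : 'rV__ => y 0 0)): lead; rewrite !mxE !mulr1 => lead.
case: (Fp2_cases a1) (Fp2_cases a2) (Fp2_cases a3) lead tail => -> [->|->] [->|->] //;
  rewrite ?scale0r ?scale1r ?addr0 ?add0r // => _.
all: by rewrite addr_eq0 oppv_Fp2 => /eqP eq_b; move: b12 b23 b31; rewrite eq_b eqxx.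
Qed.

Variables (n k : nat).
Hypotheses (k_gt0 : (0 < k)%N) (mk_le_n : ((1 + m) * k <= n)%N).

Definition binary_space (b : 'rV['F_2]_m) : fspace 'rV['F_2]_n :=
  row_image (blockmx n k (binary_weight b)).

Definition binary_code : {set fspace 'rV['F_2]_n} := [set binary_space b | b in 'rV_m].

Lemma binary_space_inj : injective binary_space.
Proof.
move=> b c /(row_image_blockmx_inj k_gt0 mk_le_n (q0 := lshift m ord0)).
rewrite !binary_weight_lead oner_eq0 => /(_ erefl isT).
by case/eq_row_mx.
Qed.

Lemma card_binary_code : #|binary_code| = (2 ^ m)%N.
Proof. by rewrite card_imset ?card_mx ?card_Fp ?mul1n //; exact: binary_space_inj. Qed.

Lemma binary_code_covering : covering_code k (2 * k) 3 binary_code.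
Proof.
apply/andP; split.
  apply/forall_inP => _ /imsetP [b _ ->].
  rewrite dim_row_image_blockmx //; apply/eqP => /rowP/(_ (lshift m ord0)).
  by rewrite binary_weight_lead mxE => /eqP; rewrite oner_eq0.
apply/forallP => S; apply/implyP => /andP [/subsetP S_code /eqP S3].
have /card_gt2P [U1 [U2 [U3 [[U1S U2S U3S] [U12 U23 U31]]]]] : (2 < #|S|)%N by rewrite S3.
have [b1 _ eU1] := imsetP (S_code _ U1S).
have [b2 _ eU2] := imsetP (S_code _ U2S).
have [b3 _ eU3] := imsetP (S_code _ U3S).
subst U1 U2 U3.
have b12 : b1 != b2 by apply: contra_neq U12 => ->.
have b23 : b2 != b3 by apply: contra_neq U23 => ->.
have b31 : b3 != b1 by apply: contra_neq U31 => ->.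
have b_free := free_binary_weight3 b12 b23 b31.
rewrite -mulSn; apply: leq_trans (dim_row_image_blockmx3 k_gt0 mk_le_n b_free) _.
apply: dimvS; rewrite !subv_add -andbA; apply/and3P; split;
  [apply: (sumv_sup _ U1S) | apply: (sumv_sup _ U2S) | apply: (sumv_sup _ U3S)];
  exact: subvv.
Qed.
End BinaryCode.

Theorem mainTheorem12 (n k : nat) :
  (0 < k)%N -> (3 * k <= n)%N ->
  (2 ^ ((n - k) %/ k) <= Bq 'F_2 n k (2 * k) 3)%N.
Proof.
move=> k_gt0 le_3k_n; set m := ((n - k) %/ k)%N.
have le_k_n : (k <= n)%N by apply: leq_trans le_3k_n; rewrite leq_pmull.
have mk_le_n : ((1 + m) * k <= n)%N.
  by rewrite mulnDl mul1n -{1}(subnKC le_k_n) leq_add2l leq_divM.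
rewrite -(card_binary_code k_gt0 mk_le_n).
exact: leq_bigmax_cond (binary_code_covering k_gt0 mk_le_n).
Qed.
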